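(* Let $\ell,n_1,\dots,n_\ell$ be positive integers and $K_1,\dots,K_\ell$ finite fields, and let $\mathcal{P}(\mathbf{K}^{\mathbf{n}})=\mathcal{P}(K_1^{n_1})\times\cdots\times\mathcal{P}(K_\ell^{n_\ell})$. Let $\rho:\mathcal{P}(\mathbf{K}^{\mathbf{n}})\to\mathbb{Z}_{\geq 0}$ be a rank function, i.e. for all $\mathcal{L},\mathcal{L}'$: (R1) $0\le\rho(\mathcal{L})\le\mathrm{Rk}(\mathcal{L})$; (R2) $\mathcal{L}\subseteq\mathcal{L}'$ implies $\rho(\mathcal{L})\le\rho(\mathcal{L}')$; (R3) $\rho(\mathcal{L}+\mathcal{L}')+\rho(\mathcal{L}\cap\mathcal{L}')\le\rho(\mathcal{L})+\rho(\mathcal{L}')$. Define $\rho^*(\mathcal{L})=\rho(\mathcal{L}^\perp)+\mathrm{Rk}(\mathcal{L})-\rho(\mathbf{K}^{\mathbf{n}})$. Then $\rho^*$ is also a rank function on $\mathcal{P}(\mathbf{K}^{\mathbf{n}})$, i.e. it satisfies (R1), (R2), (R3).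
   Context: $\mathcal{P}(K_i^{n_i})$ denotes the lattice of $K_i$-linear subspaces of $K_i^{n_i}$. Elements of $\mathcal{P}(\mathbf{K}^{\mathbf{n}})$ are tuples $\mathcal{L}=(\mathcal{L}_1,\dots,\mathcal{L}_\ell)$; inclusion $\subseteq$, sum $+$, intersection $\cap$ and orthogonal complement $\mathcal{L}^\perp=(\mathcal{L}_1^\perp,\dots,\mathcal{L}_\ell^\perp)$ are taken componentwise, where $\mathcal{L}_i^\perp$ is the orthogonal complement in $K_i^{n_i}$ with respect to the standard bilinear form. $\mathrm{Rk}(\mathcal{L})=\sum_{i=1}^\ell\dim_{K_i}\mathcal{L}_i$, and $\mathbf{K}^{\mathbf{n}}=(K_1^{n_1},\dots,K_\ell^{n_\ell})$ is the top element. *)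

From HB Require Import structures.
From mathcomp Require Import all_boot all_order all_algebra.
Set Implicit Arguments. Unset Strict Implicit. Unset Printing Implicit Defensive.
Import GRing.Theory.
Local Open Scope ring_scope.

(* An element of P(K^n) = P(K_1^{n_1}) x ... x P(K_l^{n_l}) : a tuple of
   subspaces, the i-th one a subspace of the row space K_i^{n_i}. *)
Definition lat (l : nat) (K : 'I_l -> finFieldType) (n : 'I_l -> nat) :=
  forall i : 'I_l, {vspace 'rV[K i]_(n i)}.

(* Orthogonal complement w.r.t. the standard bilinear form <u,v> = u v^T:
   the span of the (finite) set of all vectors orthogonal to every u in U
   (that set is already a subspace, so the span is exactly it). *)
Definition vperp (F : finFieldType) (m : nat) (U : {vspace 'rV[F]_m}) :
    {vspace 'rV[F]_m} :=
  <<[seq v <- enum 'rV[F]_m | [forall u : 'rV[F]_m, (u \in U) ==> (v *m u^T == 0 :> 'M[F]_(1,1))%R]]>>%VS.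

Section Lat.
Variables (l : nat) (K : 'I_l -> finFieldType) (n : 'I_l -> nat).

Definition lle (L L' : lat K n) : Prop := forall i, (L i <= L' i)%VS.
Definition ladd (L L' : lat K n) : lat K n := fun i => (L i + L' i)%VS.
Definition lcap (L L' : lat K n) : lat K n := fun i => (L i :&: L' i)%VS.
Definition lperp (L : lat K n) : lat K n := fun i => vperp (L i).
Definition ltop : lat K n := fun i => fullv.
Definition Rk (L : lat K n) : nat := \sum_(i < l) \dim (L i).

Definition rank_function (rho : lat K n -> int) : Prop :=
  [/\ (forall L, 0 <= rho L /\ rho L <= (Rk L)%:Z),
      (forall L L', lle L L' -> rho L <= rho L') &
      (forall L L', rho (ladd L L') + rho (lcap L L') <= rho L + rho L')].

Definition dual_rank (rho : lat K n -> int) : lat K n -> int :=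
  fun L => rho (lperp L) + (Rk L)%:Z - rho ltop.
End Lat.

From Stdlib Require Import FunctionalExtensionality.
From HB Require Import structures.
From mathcomp Require Import all_boot all_order all_algebra zify.
Set Implicit Arguments. Unset Strict Implicit. Unset Printing Implicit Defensive.
Import GRing.Theory.
Local Open Scope ring_scope.

(* Over each factor, [U^perp] is the kernel of [v |-> v B^T] for a basis
   matrix [B] of [U]; this map is onto because [B] has full row rank, so
   [dim U^perp = n - dim U].  Hence [^perp] is inclusion-reversing and swaps
   [+] with [:&:].  Since [Rk] is modular, (R3) for [rho^*] is (R3) for [rho]
   at [L^perp] and [L'^perp].  Monotonicity and the bounds of [rho^*] all
   reduce to the inequality [rho B - rho A <= Rk B - Rk A] for [A <= B],
   which is (R3) applied to [A] and a complement of [A] in [B]. *)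

Section OrthogonalComplement.
Variables (F : finFieldType) (m : nat).

Lemma dim_fullrV k : \dim (fullv : {vspace 'rV[F]_k}) = k.
Proof. by rewrite dimvf dim_matrix mul1r. Qed.

Section BasisMatrix.
Variable U : {vspace 'rV[F]_m}.

Definition vbasis_mx : 'M[F]_(\dim U, m) := \matrix_(i < \dim U) (vbasis U)`_i.

Lemma row_free_vbasis_mx : row_free vbasis_mx.
Proof.
apply: inj_row_free => k; rewrite mulmx_sum_row.
under eq_bigr => i _ do rewrite rowK.
move=> kB0; have /freeP k0 := basis_free (vbasisP U).
by apply/rowP => i; rewrite mxE (k0 _ kB0).
Qed.

Lemma rank_vbasis_mx : \rank vbasis_mx = \dim U.
Proof. exact/eqP/row_free_vbasis_mx. Qed.

Lemma orth_vbasis_mx (v : 'rV[F]_m) :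
  (v *m vbasis_mx^T == 0) =
  [forall u : 'rV[F]_m, (u \in U) ==> (v *m u^T == 0 :> 'M[F]_(1, 1))].
Proof.
apply/eqP/forallP => [vB0 u | vU0].
  apply/implyP => uU.
  have -> : u = (\row_i coord (vbasis U) i u) *m vbasis_mx.
    rewrite mulmx_sum_row {1}(coord_vbasis uU).
    by apply: eq_bigr => i _; rewrite rowK mxE.
  by rewrite trmx_mul mulmxA vB0 mul0mx.
apply/rowP => j; rewrite [RHS]mxE.
have := vU0 (vbasis U)`_j.
rewrite vbasis_mem ?mem_nth ?size_tuple //= => /eqP/matrixP/(_ 0 0) uj0.
rewrite [RHS]mxE in uj0; rewrite -uj0 !mxE.
by apply: eq_bigr => k _; rewrite !mxE.
Qed.

Definition orth_map : 'Hom('rV[F]_m, 'rV[F]_(\dim U)) :=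
  linfun (mulmxr vbasis_mx^T).

Lemma limg_orth_map : limg orth_map = fullv.
Proof.
apply/eqP; rewrite eqEsubv subvf; apply/subvP => w _.
have /submxP[v ->] : (w <= vbasis_mx^T)%MS.
  by apply: submx_full; rewrite /row_full mxrank_tr rank_vbasis_mx.
by have := memv_img orth_map (memvf v); rewrite lfunE.
Qed.

Lemma vperp_lker : vperp U = lker orth_map.
Proof.
apply/eqP; rewrite eqEsubv; apply/andP; split.
  apply/span_subvP => v; rewrite mem_filter => /andP[vU _].
  by rewrite memv_ker lfunE /= orth_vbasis_mx.
apply/subvP => v; rewrite memv_ker lfunE /= orth_vbasis_mx => vU.
by apply: memv_span; rewrite mem_filter vU mem_enum.
Qed.

End BasisMatrix.

Lemma mem_vperp (U : {vspace 'rV[F]_m}) (v : 'rV[F]_m) :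
  (v \in vperp U) =
  [forall u : 'rV[F]_m, (u \in U) ==> (v *m u^T == 0 :> 'M[F]_(1, 1))].
Proof. by rewrite vperp_lker memv_ker lfunE /= orth_vbasis_mx. Qed.

Lemma dim_vperp (U : {vspace 'rV[F]_m}) : (\dim (vperp U) + \dim U)%N = m.
Proof.
have := limg_ker_dim (orth_map U) fullv.
by rewrite capfv -vperp_lker limg_orth_map !dim_fullrV.
Qed.

Lemma vperpS (U V : {vspace 'rV[F]_m}) : (U <= V)%VS -> (vperp V <= vperp U)%VS.
Proof.
move=> /subvP UV; apply/subvP => v; rewrite !mem_vperp => /forallP vV0.
by apply/forallP => u; apply/implyP => /UV /(implyP (vV0 u)).
Qed.

Lemma vperpD (U V : {vspace 'rV[F]_m}) : vperp (U + V) = (vperp U :&: vperp V)%VS.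
Proof.
apply/eqP; rewrite eqEsubv subv_cap !vperpS ?addvSl ?addvSr //=.
apply/subvP => v; rewrite memv_cap !mem_vperp => /andP[/forallP vU0 /forallP vV0].
apply/forallP => w; apply/implyP => /memv_addP[a aU [b bV ->]].
by rewrite linearD mulmxDr (eqP (implyP (vU0 a) aU)) (eqP (implyP (vV0 b) bV)) addr0.
Qed.

Lemma vperpI (U V : {vspace 'rV[F]_m}) : vperp (U :&: V) = (vperp U + vperp V)%VS.
Proof.
apply/eqP; rewrite eq_sym eqEdim subv_add !vperpS ?capvSl ?capvSr //=.
have := dimv_sum_cap (vperp U) (vperp V); have := dimv_sum_cap U V.
rewrite -vperpD; have := dim_vperp (U + V); have := dim_vperp (U :&: V).
have := dim_vperp U; have := dim_vperp V; lia.
Qed.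

End OrthogonalComplement.

Section LatticeOperations.
Variables (l : nat) (K : 'I_l -> finFieldType) (n : 'I_l -> nat).
Implicit Types L A B : lat K n.

Lemma lle_ltop L : lle L (ltop K n).
Proof. by move=> i; apply: subvf. Qed.

Lemma lperpS L L' : lle L L' -> lle (lperp L') (lperp L).
Proof. by move=> LL' i; apply: vperpS. Qed.

Lemma lperp_ladd L L' : lperp (ladd L L') = lcap (lperp L) (lperp L').
Proof. by apply: functional_extensionality_dep => i; apply: vperpD. Qed.

Lemma lperp_lcap L L' : lperp (lcap L L') = ladd (lperp L) (lperp L').
Proof. by apply: functional_extensionality_dep => i; apply: vperpI. Qed.

Lemma Rk_lperp L : (Rk (lperp L) + Rk L)%N = Rk (ltop K n).
Proof.
rewrite /Rk -big_split; apply: eq_bigr => i _.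
by rewrite /ltop dim_fullrV; apply: dim_vperp.
Qed.

Lemma Rk_ladd_lcap L L' :
  (Rk (ladd L L') + Rk (lcap L L'))%N = (Rk L + Rk L')%N.
Proof. by rewrite /Rk -!big_split; apply: eq_bigr => i _; apply: dimv_sum_cap. Qed.

Lemma lle_compl A B :
  lle A B -> exists C, ladd A C = B /\ (Rk A + Rk C)%N = Rk B.
Proof.
move=> AB; exists (fun i => (B i :\: A i)%VS); split.
  apply: functional_extensionality_dep => i.
  by rewrite /ladd addvC addv_diff; apply/addv_idPl.
rewrite /Rk -big_split; apply: eq_bigr => i _ /=.
by rewrite -(dimv_cap_compl (B i) (A i)) (capv_idPr (AB i)).
Qed.

End LatticeOperations.

Section DualRank.
Variables (l : nat) (K : 'I_l -> finFieldType) (n : 'I_l -> nat).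
Variable rho : lat K n -> int.
Hypothesis rho_rank : rank_function rho.
Implicit Types L A B : lat K n.

Let rank_ge0 L : 0 <= rho L.
Proof. by case: rho_rank => bounds _ _; case: (bounds L). Qed.

Let rank_le_Rk L : rho L <= (Rk L)%:Z.
Proof. by case: rho_rank => bounds _ _; case: (bounds L). Qed.

Let rank_monotone L L' : lle L L' -> rho L <= rho L'.
Proof. by case: rho_rank => _ monotone _; apply: monotone. Qed.

Let rank_submodular L L' : rho (ladd L L') + rho (lcap L L') <= rho L + rho L'.
Proof. by case: rho_rank => _ _ submodular; apply: submodular. Qed.

Lemma rank_incr_le_Rk A B : lle A B -> rho B - rho A <= (Rk B)%:Z - (Rk A)%:Z.
Proof.
case/lle_compl => C [AC_B RkC].
have := rank_submodular A C; rewrite AC_B.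
have := rank_ge0 (lcap A C); have := rank_le_Rk C; lia.
Qed.

Lemma dual_rank_ge0 L : 0 <= dual_rank rho L.
Proof.
have := rank_incr_le_Rk (lle_ltop (lperp L)); have := Rk_lperp L.
rewrite /dual_rank; lia.
Qed.

Lemma dual_rank_le_Rk L : dual_rank rho L <= (Rk L)%:Z.
Proof. have := rank_monotone (lle_ltop (lperp L)); rewrite /dual_rank; lia. Qed.

Lemma dual_rank_monotone L L' : lle L L' -> dual_rank rho L <= dual_rank rho L'.
Proof.
move=> /lperpS /rank_incr_le_Rk; have := Rk_lperp L; have := Rk_lperp L'.
rewrite /dual_rank; lia.
Qed.

Lemma dual_rank_submodular L L' :
  dual_rank rho (ladd L L') + dual_rank rho (lcap L L') <=
  dual_rank rho L + dual_rank rho L'.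
Proof.
have := rank_submodular (lperp L) (lperp L'); have := Rk_ladd_lcap L L'.
rewrite /dual_rank lperp_ladd lperp_lcap; lia.
Qed.

End DualRank.

Theorem mainTheorem2 (l : nat) (K : 'I_l -> finFieldType) (n : 'I_l -> nat)
  (hl : (0 < l)%N) (hn : forall i, (0 < n i)%N)
  (rho : lat K n -> int) :
  rank_function rho -> rank_function (dual_rank rho).
Proof.
move=> rho_rank; split.
- by move=> L; split; [apply: dual_rank_ge0 | apply: dual_rank_le_Rk].
- exact: dual_rank_monotone.
- exact: dual_rank_submodular.
Qed.
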